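(* Let $K_0$ be any continuum. There exist compact Hausdorff spaces $K_1$, $K_2$, $K_3$ such that for each $1\leq i\leq 3$, $K_i$ is an extension of $K_{i-1}$ by continuous functions (i.e. $K_i=K_{i-1}((f^{(i)}_n)_{n\in\mathbb{N}})$ for some pairwise disjoint sequence $(f^{(i)}_n)_{n\in\mathbb{N}}$ in $C_1(K_{i-1})$), and $K_3$ is disconnected.
   Context: All spaces are Hausdorff. A continuum is a metrizable, compact, connected space. For a compact space $K$, $C_1(K)$ denotes the set of continuous functions $K\to[0,1]$; $f,g$ are disjoint if $f\cdot g=0$. For a real function $f$ on $K$, $supp(f)$ is the closure of $\{x\in K: f(x)\neq 0\}$. For a pairwise disjoint sequence $(f_n)_{n\in\mathbb{N}}$ in $C_1(K)$, let $D((f_n)_{n\in\mathbb{N}})$ be the union of all open sets $U\subseteq K$ such that $\{n: U\cap supp(f_n)\neq\emptyset\}$ is finite. The extension of $K$ by $(f_n)_{n\in\mathbb{N}}$, denoted $K((f_n)_{n\in\mathbb{N}})$, is the closure in $K\times[0,1]$ of the graph of the function $\sum_{n\in\mathbb{N}} f_n$ restricted to $D((f_n)_{n\in\mathbb{N}})$. *)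

From HB Require Import structures.
From mathcomp Require Import all_boot all_order all_algebra.
From mathcomp Require Import all_classical all_reals all_analysis.
Set Implicit Arguments. Unset Strict Implicit. Unset Printing Implicit Defensive.
Import Order.TTheory GRing.Theory Num.Theory.
Import numFieldNormedType.Exports.
Local Open Scope classical_set_scope.
Local Open Scope ring_scope.

Section Ext.
Variables (R : realType) (X : topologicalType).

Definition inC1 (K : set X) (f : X -> R) : Prop :=
  {within K, continuous f} /\ (forall x, K x -> 0 <= f x <= 1).

Definition disj_seq_C1 (K : set X) (f : nat -> X -> R) : Prop :=
  (forall n, inC1 K (f n)) /\
  (forall n m, n <> m -> forall x, K x -> f n x * f m x = 0).

Definition supp (K : set X) (g : X -> R) : set X :=
  K `&` closure [set x | K x /\ g x <> 0].

(* D((f_n)): union of the (relatively) open subsets U = K ∩ V of K meeting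
   only finitely many supports. *)
Definition Dset (K : set X) (f : nat -> X -> R) : set X :=
  [set x | K x /\ exists V : set X, open V /\ V x /\
       finite_set [set n | (V `&` K `&` supp K (f n)) !=set0]].

Definition sumf (f : nat -> X -> R) (x : X) : R :=
  limn (fun N => \sum_(0 <= n < N) f n x).

Definition ext (K : set X) (f : nat -> X -> R) : set (X * R)%type :=
  closure [set p | Dset K f p.1 /\ p.2 = sumf f p.1].

End Ext.

(* Separate two points of K0 by a continuous phi with phi < 0 at one and
   phi > 2 at the other, and work along w = 1 / phi.  The first extension sums
   tents of height 1 on the windows n + 1 < w < n + 2: a topologist's sine
   curve, whose closure adds the segments {x} * [0, 1] over phi x = 0.  The
   second extension sums plateaus equal to 1 around w = n + 1, i.e. exactly
   where the tents are low, so near a point (x, t) with phi x = 0 and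
   0 < t < 2/3 the graph meets infinitely many plateau supports; such points
   are not in D, and K2 splits into the disjoint closed pieces
   {phi <= 0, t1 <= 0, t2 = 0} and {phi >= 0, t2 = 1 or t1 >= 2/3 or phi >= 1}.
   Extending K2 by the zero sequence gives a copy of K2. *)

From HB Require Import structures.
From mathcomp Require Import all_boot all_order all_algebra.
From mathcomp Require Import all_classical all_reals all_analysis.
From mathcomp Require Import zify lra.
Set Implicit Arguments.
Unset Strict Implicit.
Unset Printing Implicit Defensive.
Import Order.TTheory GRing.Theory Num.Theory.
Import numFieldNormedType.Exports.
Local Open Scope classical_set_scope.
Local Open Scope ring_scope.

Lemma continuous_fst (U V : topologicalType) : continuous (@fst U V).
Proof. by move=> p; exact: cvg_fst. Qed.

Lemma continuous_snd (U V : topologicalType) : continuous (@snd U V).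
Proof. by move=> p; exact: cvg_snd. Qed.

Lemma continuous_comp_fst (U V W : topologicalType) (g : U -> W) :
  continuous g -> continuous (g \o @fst U V).
Proof. by move=> gc p; apply: continuous_comp; [exact: continuous_fst | exact: gc]. Qed.

Lemma finite_nat_bound (S : set nat) : finite_set S ->
  exists N, forall n, S n -> (n < N)%N.
Proof.
move=> fS; exists (\max_(n <- finmap.enum_fset (fset_set S)) n).+1 => n Sn.
by rewrite ltnS; apply: (@leq_bigmax_seq _ _ xpredT id); rewrite ?in_fset_set ?inE.
Qed.

Lemma not_connected_cover (X : topologicalType) (A B C : set X) :
  closed A -> closed B -> C `<=` A `|` B -> A `&` B = set0 ->
  C `&` A !=set0 -> C `&` B !=set0 -> ~ connected C.
Proof.
move=> cA cB CAB AB0 CA [z [Cz Bz]] conC.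
have notAB y : A y -> B y -> False by move=> Ay By; rewrite -[False]/(set0 y) -AB0.
have CAE : C `&` A = C.
  apply: conC CA _ _; last by exists A.
  exists (~` B); first exact: closed_openC.
  apply/seteqP; split=> y [Cy Hy]; split => //; first exact: notAB.
  by case: (CAB y Cy).
by rewrite -CAE in Cz; case: Cz => _ /notAB; apply.
Qed.

Section Extension.
Variables (R : realType) (X : topologicalType).
Implicit Types (K V : set X) (f : nat -> X -> R).

Lemma sumf_eventually0 f x N : (forall n, (N <= n)%N -> f n x = 0) ->
  sumf f x = \sum_(0 <= n < N) f n x.
Proof.
move=> f0; apply: lim_near_cst => //; exists N => // M /= NM.
rewrite (big_cat_nat (leq0n N) NM) /= [X in _ + X]big_nat_cond [X in _ + X]big1 ?addr0 //.
by move=> n /andP[/andP[Nn _] _]; exact: f0.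
Qed.

Lemma sumf_single f x k : (forall n, n <> k -> f n x = 0) -> sumf f x = f k x.
Proof.
move=> f0; rewrite (sumf_eventually0 (N := k.+1)) => [|n kn]; last by apply: f0; lia.
rewrite big_nat_recr //= big_nat_cond big1 ?add0r // => n /andP[/andP[_ nk] _].
by apply: f0; lia.
Qed.

Lemma sumf_neq0 f x : sumf f x != 0 -> exists k, f k x != 0.
Proof.
move=> s0; apply: contrapT => no_k.
have f0 n : f n x = 0 by have [|fn0] := eqVneq (f n x) 0; last by case: no_k; exists n.
by move: s0; rewrite (sumf_single (k := 0)) ?f0 ?eqxx.
Qed.

Lemma sumf_disj K f x k : disj_seq_C1 K f -> K x -> f k x != 0 -> sumf f x = f k x.
Proof.
move=> [_ fdisj] Kx fk0; apply: sumf_single => n nk.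
by apply/eqP; rewrite -(mulIr_eq0 _ (mulIf fk0)) fdisj.
Qed.

Lemma sumf_itv K f x : disj_seq_C1 K f -> K x -> 0 <= sumf f x <= 1.
Proof.
move=> df Kx; have [->|/sumf_neq0[k fk0]] := eqVneq (sumf f x) 0.
  by rewrite lexx ler01.
by rewrite (sumf_disj df Kx fk0); apply: (df.1 k).2.
Qed.

Lemma continuous_sum f x N : (forall n, {for x, continuous (f n)}) ->
  {for x, continuous (fun y => \sum_(0 <= n < N) f n y)}.
Proof.
move=> fc; elim: N => [|N IH].
  have -> : (fun y => \sum_(0 <= n < 0) f n y) = cst 0.
    by apply/funext => y; rewrite big_geq.
  exact: cvg_cst.
have -> : (fun y => \sum_(0 <= n < N.+1) f n y) =
          (fun y => \sum_(0 <= n < N) f n y) + f N.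
  by apply/funext => y; rewrite big_nat_recr.
exact: continuousD.
Qed.

Lemma Dset_eventually0 K f V x N : K x -> open V -> V x ->
  (forall n y, (N <= n)%N -> V y -> f n y = 0) -> Dset K f x.
Proof.
move=> Kx oV Vx f0; split => //; exists V; split => //; split => //.
apply: (sub_finite_set _ (finite_II N)) => n [y [[Vy _] [_ cl_y]]] /=.
rewrite ltnNge; apply/negP => Nn.
have [z [[_ fz] Vz]] := cl_y V (open_nbhs_nbhs (conj oV Vy)).
exact: fz (f0 _ _ Nn Vz).
Qed.

Lemma ext_graph K f x : Dset K f x -> ext K f (x, sumf f x).
Proof. by move=> Dx; apply: subset_closure. Qed.

Lemma ext_vanishing K f V x : K x -> open V -> V x ->
  (forall n y, V y -> f n y = 0) -> ext K f (x, 0).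
Proof.
move=> Kx oV Vx f0.
have -> : 0 = sumf f x by rewrite (sumf_eventually0 (N := 0)) ?big_geq // => n _; exact: f0.
by apply/ext_graph/(Dset_eventually0 (N := 0) Kx oV Vx) => n y _; exact: f0.
Qed.

(* Near [x] the sum is the finite, hence continuous, sum of [f 0], ...,
   [f (N - 1)], so the closure adds nothing above [x]. *)
Lemma ext_fiber K f V x t N : open V -> V x ->
  (forall n y, (N <= n)%N -> V y -> f n y = 0) ->
  (forall n, {for x, continuous (f n)}) -> ext K f (x, t) -> t = sumf f x.
Proof.
move=> oV Vx f0 fc ext_xt.
pose S y := \sum_(0 <= n < N) f n y.
pose G := (@snd X R) - (S \o fst).
have sumfV y : V y -> sumf f y = S y.
  by move=> Vy; apply: sumf_eventually0 => n Nn; exact: f0.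
suff /eqP : G (x, t) = 0 by rewrite subr_eq0 sumfV // => /eqP.
apply/eqP/negP => /negP Gxt.
have Gc : {for (x, t), continuous G}.
  apply: continuousB; first exact: continuous_snd.
  exact: continuous_comp (@continuous_fst _ _ (x, t)) (continuous_sum (N := N) fc).
have nbhsG : nbhs (x, t) (G @^-1` [set r | r != 0]).
  by apply: Gc; apply: open_nbhs_nbhs; split => //; exact: open_neq.
have nbhsV : nbhs (x, t) (fst @^-1` V).
  by apply: continuous_fst; exact: open_nbhs_nbhs.
have [[y s] [[Dy /= ->] [/eqP Gys Vy]]] := ext_xt _ (filterI nbhsG nbhsV).
by apply: Gys; rewrite /G !fctE sumfV // subrr.
Qed.

Lemma ext_sub K f : closed K -> disj_seq_C1 K f -> ext K f `<=` K `*` (`[0, 1] : set R).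
Proof.
move=> cK df; have cKI : closed (K `*` (`[0, 1] : set R)).
  apply: closedI; apply: (continuous_closedP _).1 => //; do ?exact: interval_closed.
    exact: continuous_fst.
  exact: continuous_snd.
rewrite /ext closureE; apply: smallest_sub => // -[x t] /= [[Kx _] ->].
by split => //=; rewrite in_itv /=; exact: sumf_itv df Kx.
Qed.

Lemma ext_compact K f : compact K -> closed K -> disj_seq_C1 K f -> compact (ext K f).
Proof.
move=> cpK cK df; apply: (subclosed_compact _ _ (ext_sub cK df)).
  exact: closed_closure.
by apply: compact_setX => //; exact: segment_compact.
Qed.

Lemma disj_seq_C1_0 K : disj_seq_C1 K (fun _ _ => 0 : R).
Proof.
split=> [n|n m _ x _]; last by rewrite mulr0.
by split=> [|x _]; [apply: continuous_subspaceT => x; exact: cvg_cst | rewrite lexx ler01].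
Qed.

Lemma ext0_disconnected K : closed K -> ~ connected K ->
  ~ connected (ext K (fun _ _ => 0 : R)).
Proof.
move=> cK nconK con_ext; apply: nconK.
have -> : K = fst @` ext K (fun _ _ => 0 : R).
  apply/seteqP; split => [x Kx|_ [[x t] /(ext_sub cK (disj_seq_C1_0 K)) [Kx _] <-] //].
  by exists (x, 0) => //; apply: (ext_vanishing (V := setT)) => //; exact: openT.
apply: connected_continuous_connected con_ext _.
by apply: continuous_subspaceT; exact: continuous_fst.
Qed.

End Extension.

Section Bumps.
Variable R : realType.
Implicit Types (c w : R) (n : nat).

Definition hat c w : R := Num.max 0 (1 - 2 * `|w - c|).
Definition tent n : R -> R := hat (n%:R + 3/2).
Definition plateau n w : R := Num.min 1 (3 * hat (n%:R + 1) w).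

Lemma hat_itv c w : 0 <= hat c w <= 1.
Proof.
rewrite /hat le_max lexx ge_max ler01 /=; have := normr_ge0 (w - c); lra.
Qed.

Lemma hat_neq0 c w : hat c w != 0 -> `|w - c| < 1/2.
Proof.
apply: contraR; rewrite -leNgt => wc; rewrite /hat max_l //; lra.
Qed.

Lemma hatE c w : `|w - c| <= 1/2 -> hat c w = 1 - 2 * `|w - c|.
Proof. by move=> wc; rewrite /hat max_r //; lra. Qed.

Lemma hat_continuous c : continuous (hat c).
Proof.
apply: max_fun_continuous; first exact: cst_continuous.
move=> w; apply: cvgB; first exact: cvg_cst.
apply: cvgM; first exact: cvg_cst.
by apply: cvg_norm; apply: cvgB; [exact: cvg_id | exact: cvg_cst].
Qed.

Lemma plateau_itv n w : 0 <= plateau n w <= 1.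
Proof.
have /andP[h0 _] := hat_itv (n%:R + 1) w.
by rewrite /plateau ge_min lexx le_min ler01 /=; lra.
Qed.

Lemma plateau_neq0 n w : plateau n w != 0 -> `|w - (n%:R + 1)| < 1/2.
Proof.
move=> p0; apply: hat_neq0; apply: contra_neq p0 => h0.
by rewrite /plateau h0 mulr0 min_r.
Qed.

Lemma plateau_eq1 n w : `|w - (n%:R + 1)| <= 1/3 -> plateau n w = 1.
Proof. by move=> wn; rewrite /plateau hatE ?min_l //; lra. Qed.

Lemma plateau_continuous n : continuous (plateau n).
Proof.
apply: min_fun_continuous; first exact: cst_continuous.
by move=> w; apply: cvgM; [exact: cvg_cst | exact: hat_continuous].
Qed.

(* Where no plateau equals 1, we are within 1/6 of the top of a tent. *)
Lemma bump_cover w : 1 <= w -> exists2 n, w < n.+2%:R &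
  [\/ plateau n w = 1, plateau n.+1 w = 1 | 2/3 <= tent n w].
Proof.
move=> w1; have /andP[] := truncn_itv (le_trans ler01 w1).
have : (0 < Num.truncn w)%N by rewrite truncn_gt0.
case: (Num.truncn w) => // n _ nw wn; rewrite -!natr1 in nw wn.
exists n; first by rewrite -!natr1.
have [lo|lo] := lerP w (n%:R + 4/3).
  by constructor 1; apply: plateau_eq1; rewrite ler_norml; lra.
have [hi|hi] := lerP (n%:R + 5/3) w.
  by constructor 2; apply: plateau_eq1; rewrite -natr1 ler_norml; lra.
constructor 3; rewrite /tent hatE; last by rewrite ler_norml; lra.
suff : `|w - (n%:R + 3/2)| <= 1/6 by lra.
by rewrite ler_norml; lra.
Qed.

End Bumps.

Definition bump_family (R : realType) (h : nat -> R -> R) :=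
  [/\ forall n, continuous (h n), forall n w, 0 <= h n w <= 1
    & exists2 c, 1 <= c <= 3/2 &
        forall n w, h n w != 0 -> `|w - (n%:R + c)| < 1/2].

Lemma tent_bump_family (R : realType) : bump_family (@tent R).
Proof.
split=> [n|n w|]; [exact: hat_continuous | exact: hat_itv | exists (3/2)].
- by apply/andP; split; lra.
- by move=> n w; exact: hat_neq0.
Qed.

Lemma plateau_bump_family (R : realType) : bump_family (@plateau R).
Proof.
split; [exact: plateau_continuous | exact: plateau_itv | exists 1].
- by apply/andP; split; lra.
- exact: plateau_neq0.
Qed.

Section RecipBumps.
Variables (R : realType) (Y : topologicalType) (h : nat -> R -> R) (psi : Y -> R).
Hypothesis hb : bump_family h.

(* [h n] read along [1 / psi]; below the cut [1 / (n + 2)], where [h n]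
   vanishes anyway, the argument is frozen, so the result is continuous
   also where [psi <= 0]. *)
Definition recip_bumps n y := h n (Num.max (psi y) n.+2%:R^-1)^-1.

Let cut_gt0 n : 0 < n.+2%:R^-1 :> R.
Proof. by rewrite invr_gt0 ltr0n. Qed.

Let h_eq0 n (w : R) : w <= n%:R + 1/2 \/ n.+2%:R <= w -> h n w = 0.
Proof.
have [_ _ [c /andP[c1 c2] hc]] := hb; move=> wn.
apply/eqP/negP => /negP/hc; rewrite ltr_norml => /andP[].
by rewrite -[n.+2%:R]natr1 -[n.+1%:R]natr1 in wn; case: wn; lra.
Qed.

Lemma recip_bumpsE n y : n.+2%:R^-1 <= psi y -> recip_bumps n y = h n (psi y)^-1.
Proof. by move=> cut_psi; rewrite /recip_bumps max_l. Qed.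

Lemma recip_bumps_le_cut n y : psi y <= n.+2%:R^-1 -> recip_bumps n y = 0.
Proof. by move=> psi_cut; rewrite /recip_bumps max_r // invrK h_eq0 //; right. Qed.

Lemma recip_bumps_nonpos n y : psi y <= 0 -> recip_bumps n y = 0.
Proof. by move=> psi0; apply/recip_bumps_le_cut/(le_trans psi0)/ltW. Qed.

Lemma recip_bumps_recip_le n y : 0 < psi y -> (psi y)^-1 <= n%:R + 1/2 ->
  recip_bumps n y = 0.
Proof.
move=> psi0 psin; rewrite recip_bumpsE ?h_eq0 //; first by left.
rewrite -[psi y]invrK lef_pV2 ?posrE ?invr_gt0 ?ltr0n //.
by apply: (le_trans psin); rewrite -[n.+2%:R]natr1 -[n.+1%:R]natr1; lra.
Qed.

Lemma recip_bumps_far n y : psi y <= 0 \/ 2 <= psi y -> recip_bumps n y = 0.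
Proof.
case=> [/recip_bumps_nonpos //|psi2]; have psi0 : 0 < psi y by lra.
apply: recip_bumps_recip_le => //.
have : (psi y)^-1 <= 2^-1 by rewrite lef_pV2 ?posrE.
have := ler0n R n; lra.
Qed.

Lemma recip_bumps_neq0 n y : recip_bumps n y != 0 ->
  n.+2%:R^-1 < psi y /\ recip_bumps n y = h n (psi y)^-1.
Proof.
move=> b0; have cut_psi : n.+2%:R^-1 < psi y.
  by rewrite ltNge; apply: contra b0 => /recip_bumps_le_cut ->.
by split => //; rewrite recip_bumpsE ?ltW.
Qed.

Lemma recip_bumps_itv n y : 0 <= recip_bumps n y <= 1.
Proof. by have [_ hitv _] := hb; exact: hitv. Qed.

Lemma recip_bumps_disj n m y : n <> m -> recip_bumps n y * recip_bumps m y = 0.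
Proof.
have [_ _ [c _ hc]] := hb; move=> nm.
have [->|bn] := eqVneq (recip_bumps n y) 0; first by rewrite mul0r.
have [->|bm] := eqVneq (recip_bumps m y) 0; first by rewrite mulr0.
have [_ En] := recip_bumps_neq0 bn; have [_ Em] := recip_bumps_neq0 bm.
move: bn bm; rewrite En Em => /hc + /hc; rewrite !ltr_norml => /andP[n1 n2] /andP[m1 m2].
have : n%:R < m.+1%:R :> R by rewrite -natr1; lra.
have : m%:R < n.+1%:R :> R by rewrite -natr1; lra.
by rewrite !ltr_nat; lia.
Qed.

Hypothesis psi_continuous : continuous psi.

Lemma recip_bumps_continuous n : continuous (recip_bumps n).
Proof.
have [hc _ _] := hb; move=> y.
have cut_max : 0 < Num.max (psi y) n.+2%:R^-1 by rewrite lt_max cut_gt0 orbT.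
apply: (continuous_comp (f := fun y => (Num.max (psi y) n.+2%:R^-1)^-1)); last exact: hc.
apply: continuousV; first by rewrite gt_eqF.
by apply: max_fun_continuous => //; exact: cst_continuous.
Qed.

Lemma recip_bumps_disj_seq K : disj_seq_C1 K recip_bumps.
Proof.
split=> [n|n m nm y _]; last exact: recip_bumps_disj.
split=> [|y _]; last exact: recip_bumps_itv.
exact/continuous_subspaceT/recip_bumps_continuous.
Qed.

Lemma recip_bumps_eventually0 d : 0 < d ->
  exists N, forall n y, (N <= n)%N -> d < psi y -> recip_bumps n y = 0.
Proof.
move=> d0; have dinv0 : 0 <= d^-1 by rewrite invr_ge0 ltW.
have /andP[_ dN] := truncn_itv dinv0.
exists (Num.truncn d^-1).+1 => n y Nn dpsi.
have psi0 : 0 < psi y := lt_trans d0 dpsi.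
apply: recip_bumps_recip_le => //.
have : (psi y)^-1 < d^-1 by rewrite ltf_pV2 ?posrE.
have : (Num.truncn d^-1).+1%:R <= n%:R :> R by rewrite ler_nat.
lra.
Qed.

Lemma sumf_recip_bumps_nonpos y : psi y <= 0 -> sumf recip_bumps y = 0.
Proof.
move=> psi0; rewrite (sumf_eventually0 (N := 0)) ?big_geq // => n _.
exact: recip_bumps_nonpos.
Qed.

End RecipBumps.

Section Construction.
Variables (R : realType) (T : topologicalType) (phi : T -> R).
Hypothesis phi_continuous : continuous phi.

Let phi1 := phi \o @fst T R.
Let F1 := recip_bumps (@tent R) phi.
Let F2 := recip_bumps (@plateau R) phi1.
Let K1 := ext [set: T] F1.
Let K2 := ext K1 F2.

Let tent_bumps := tent_bump_family R.
Let plateau_bumps := plateau_bump_family R.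

Let phi1_continuous : continuous phi1 := continuous_comp_fst phi_continuous.

Let F1_disj : disj_seq_C1 [set: T] F1 := recip_bumps_disj_seq tent_bumps phi_continuous _.
Let F2_disj : disj_seq_C1 [set: T * R] F2 :=
  recip_bumps_disj_seq plateau_bumps phi1_continuous _.

Let open_phi (A : set R) : open A -> open (phi @^-1` A).
Proof. by apply: open_comp => y _; exact: phi_continuous. Qed.

Let open_phi1 (A : set R) : open A -> open (phi1 @^-1` A).
Proof. by apply: open_comp => p _; exact: phi1_continuous. Qed.

Lemma K1_fiber x t : K1 (x, t) -> phi x != 0 -> t = sumf F1 x.
Proof.
have F1c n := recip_bumps_continuous tent_bumps phi_continuous (n := n) (x := x).
move=> K1xt; rewrite neq_lt => /orP[phi_neg|phi_pos].
  apply: (ext_fiber (V := phi @^-1` [set s | s < 0]) (N := 0)) K1xt => //.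
    exact/open_phi/open_lt.
  by move=> n y _ /= /ltW; exact: (recip_bumps_nonpos tent_bumps).
have half_pos : 0 < phi x / 2 by rewrite divr_gt0.
have [N FN] := recip_bumps_eventually0 phi tent_bumps half_pos.
apply: (ext_fiber (V := phi @^-1` [set s | phi x / 2 < s]) (N := N)) K1xt => //.
- exact/open_phi/open_gt.
- by rewrite /= ltr_pdivrMr //; lra.
Qed.

Lemma sumf_bump_cover x t : 0 < phi x < 1 -> sumf F2 (x, t) = 1 \/ 2/3 <= sumf F1 x.
Proof.
move=> /andP[phi0 phi_lt1]; have w1 : 1 <= (phi x)^-1 by rewrite invf_ge1 ?ltW.
have [n wn cover] := bump_cover w1.
have cut m : (n <= m)%N -> m.+2%:R^-1 <= phi x.
  move=> nm; rewrite -[phi x]invrK lef_pV2 ?posrE ?invr_gt0 ?ltr0n //.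
  by rewrite (le_trans (ltW wn)) // ler_nat; lia.
have F2_one m : (n <= m)%N -> plateau m (phi x)^-1 = 1 -> sumf F2 (x, t) = 1.
  move=> nm pl; have F2m : F2 m (x, t) = 1 by rewrite /F2 recip_bumpsE ?pl ?cut.
  by rewrite (sumf_disj (k := m) F2_disj) // F2m oner_neq0.
case: cover => [pl|pl|tn]; [left; exact: F2_one pl | left; exact: (F2_one n.+1) | right].
have F1n : F1 n x = tent n (phi x)^-1 by rewrite /F1 recip_bumpsE ?cut.
have F1n0 : F1 n x != 0 by rewrite F1n gt_eqF // (lt_le_trans _ tn).
by rewrite (sumf_disj (k := n) F1_disj) // F1n.
Qed.

(* Graph points near [(x, t)] have small [phi] and tent value below 2/3, so by
   [sumf_bump_cover] they lie on plateaus of arbitrarily high index. *)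
Lemma K1_hole p : K1 p -> phi p.1 = 0 -> 0 < p.2 < 2/3 -> ~ Dset K1 F2 p.
Proof.
move=> K1p phi0 /andP[t0 t1] [_ [V [oV [Vp /finite_nat_bound[N HN]]]]].
pose B := V `&` phi1 @^-1` [set s | s < N.+2%:R^-1] `&`
          snd @^-1` ([set s | 0 < s] `&` [set s | s < 2/3]).
have oB : open B.
  apply: openI; first by apply: openI => //; exact/open_phi1/open_lt.
  apply: open_comp => [q _|]; first exact: continuous_snd.
  by apply: openI; [exact: open_gt | exact: open_lt].
have Bp : B p by split; [split|] => //=; rewrite /phi1 /= phi0 invr_gt0.
have [[y s] [[Dy /= ->] [[Vy phiy] [s0 s1]]]] := K1p B (open_nbhs_nbhs (conj oB Bp)).
move: phiy s0 s1; rewrite /phi1 /= => phiy s0 s1.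
have phiy0 : 0 < phi y.
  rewrite ltNge; apply/negP => /(sumf_recip_bumps_nonpos tent_bumps) sum0.
  by rewrite -/F1 sum0 ltxx in s0.
have phiy1 : phi y < 1.
  by rewrite (lt_le_trans phiy) // invf_le1 ?ltr0n // ler1n.
have [F2y|] := sumf_bump_cover (sumf F1 y) (introT andP (conj phiy0 phiy1));
  last by rewrite leNgt s1.
have [j F2j] : exists j, F2 j (y, sumf F1 y) != 0.
  by apply: sumf_neq0; rewrite F2y oner_neq0.
have [cut_j _] := recip_bumps_neq0 plateau_bumps F2j.
suff : (j < N)%N.
  by move: (lt_trans cut_j phiy); rewrite ltf_pV2 ?posrE ?ltr0n // ltr_nat; lia.
have K1y : K1 (y, sumf F1 y) := ext_graph Dy.
apply: HN; exists (y, sumf F1 y); split=> //; split=> //.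
by apply: subset_closure; split => //; apply/eqP.
Qed.

Let phi2 := phi1 \o @fst (T * R) R.
Let EA := [set q | phi2 q <= 0 /\ q.1.2 <= 0 /\ q.2 = 0].
Let EB := [set q | 0 <= phi2 q /\ (q.2 = 1 \/ 2/3 <= q.1.2 \/ 1 <= phi2 q)].

Let EA_EB_disjoint : EA `&` EB = set0.
Proof.
apply/seteqP; split => // q [[a1 [a2 a3]] [b1 [b2|[b2|b2]]]] /=; lra.
Qed.

Let phi2_continuous : continuous phi2 := continuous_comp_fst phi1_continuous.

Let t1_continuous : continuous (@snd T R \o @fst (T * R) R) :=
  continuous_comp_fst (@continuous_snd T R).

Let closed_preimage (g : (T * R) * R -> R) (A : set R) :
  continuous g -> closed A -> closed (g @^-1` A).
Proof. by move=> gc; apply: (continuous_closedP g).1. Qed.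

Let closed_EA : closed EA.
Proof.
apply: closedI; first exact: closed_preimage phi2 _ phi2_continuous (@closed_le _ 0).
apply: closedI; first exact: closed_preimage (snd \o fst) _ t1_continuous (@closed_le _ 0).
exact: closed_preimage snd _ (@continuous_snd (T * R)%type R) (@closed_eq _ 0).
Qed.

Let closed_EB : closed EB.
Proof.
apply: closedI; first exact: closed_preimage phi2 _ phi2_continuous (@closed_ge _ 0).
apply: closedU.
  exact: closed_preimage snd _ (@continuous_snd (T * R)%type R) (@closed_eq _ 1).
apply: closedU; first exact: closed_preimage (snd \o fst) _ t1_continuous (@closed_ge _ _).
exact: closed_preimage phi2 _ phi2_continuous (@closed_ge _ 1).
Qed.

Lemma K2_cover : K2 `<=` EA `|` EB.
Proof.
rewrite /K2 /ext closureE; apply: smallest_sub; first exact: closedU.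
move=> -[[x t] _] /= [Dxt ->].
have K1xt := Dxt.1; rewrite /EA /EB.
have F2_nonpos : phi x <= 0 -> sumf F2 (x, t) = 0.
  exact: (sumf_recip_bumps_nonpos (psi := phi1) plateau_bumps (y := (x, t))).
have [phi_neg|phi_pos|phi0] := ltgtP (phi x) 0.
- have t0 : t = 0.
    rewrite (K1_fiber K1xt (ltr0_neq0 phi_neg)).
    by rewrite (sumf_recip_bumps_nonpos tent_bumps) ?ltW.
  by left; rewrite F2_nonpos ?ltW // t0; split => //; exact: ltW.
- right; split; first exact: ltW.
  have [phi_lt1|] := ltP (phi x) 1; last by right; right.
  rewrite (K1_fiber K1xt (lt0r_neq0 phi_pos)).
  by case: (sumf_bump_cover t (introT andP (conj phi_pos phi_lt1))); [left | right; left].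
- have phi2_0 : phi2 (x, t, 0) = 0 by rewrite /phi2 /phi1 /= phi0.
  rewrite F2_nonpos ?phi0 //.
  have [t_le0|t_pos] := leP t 0; first by left; rewrite /= phi2_0.
  have [t_ge|t_lt] := leP (2/3) t.
    by right; rewrite /= phi2_0; split => //; right; left.
  by case: (K1_hole K1xt phi0 (introT andP (conj t_pos t_lt)) Dxt).
Qed.

Lemma K2_far x : phi x < 0 \/ 2 < phi x -> K2 ((x, 0), 0).
Proof.
pose far := [set s : R | s < 0] `|` [set s | 2 < s].
have far_open : open far by apply: openU; [exact: open_lt | exact: open_gt].
have far_le s : far s -> s <= 0 \/ 2 <= s by case=> /ltW; [left | right].
move=> farx; have K1x : K1 (x, 0).
  apply: (ext_vanishing (V := phi @^-1` far)) => //; first exact: open_phi.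
  by move=> n y /far_le; apply: (recip_bumps_far tent_bumps).
apply: (ext_vanishing (V := phi1 @^-1` far)) => //; first exact: open_phi1.
by move=> n y /far_le; apply: (recip_bumps_far plateau_bumps).
Qed.

Lemma K2_disconnected a b : phi a < 0 -> 2 < phi b -> ~ connected K2.
Proof.
move=> phia phib; apply: (not_connected_cover closed_EA closed_EB K2_cover EA_EB_disjoint).
- exists ((a, 0), 0); split; first by apply: K2_far; left.
  by split => //; exact: ltW.
- exists ((b, 0), 0); split; first by apply: K2_far; right.
  by split; [rewrite /phi2 /phi1 /=; lra | right; right; rewrite /phi2 /phi1 /=; lra].
Qed.

End Construction.

Theorem mainTheorem5 (R : realType) (T : pseudoMetricType R)
  (hausT : hausdorff_space T) (compT : compact [set: T])
  (connT : connected [set: T]) (nondeg : exists x y : T, x <> y) :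
  exists (f1 : nat -> T -> R) (f2 : nat -> (T * R)%type -> R)
         (f3 : nat -> ((T * R) * R)%type -> R),
    let K0 := [set: T] in
    let K1 := ext K0 f1 in
    let K2 := ext K1 f2 in
    let K3 := ext K2 f3 in
    [/\ disj_seq_C1 K0 f1, disj_seq_C1 K1 f2, disj_seq_C1 K2 f3,
        compact K1 /\ compact K2 /\ compact K3
      & ~ connected K3].
Proof.
have [a [b ab]] := nondeg.
have closed1 (x : T) : closed [set x].
  by apply: accessible_closed_set1; exact: hausdorff_accessible.
have ab0 : [set a] `&` [set b] = set0 by apply/seteqP; split => // x [-> /ab].
have lt13 : -1 < 3 :> R by lra.
have [phi [phi_continuous phia phib _]] :=
  urysohn_ext_itv (@pseudometric_normal R T) (closed1 a) (closed1 b) ab0 lt13.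
have phi1_continuous : continuous (phi \o @fst T R) := continuous_comp_fst phi_continuous.
exists (recip_bumps (@tent R) phi), (recip_bumps (@plateau R) (phi \o fst)), (fun _ _ => 0).
move=> K0 K1 K2 K3.
have dF1 := recip_bumps_disj_seq (tent_bump_family R) phi_continuous K0.
have dF2 := recip_bumps_disj_seq (plateau_bump_family R) phi1_continuous K1.
have dF3 := disj_seq_C1_0 R K2.
have clK1 : closed K1 by exact: closed_closure.
have clK2 : closed K2 by exact: closed_closure.
have cK1 : compact K1 := ext_compact compT closedT dF1.
have cK2 : compact K2 := ext_compact cK1 clK1 dF2.
split => //; first by split => //; split => //; exact: ext_compact cK2 clK2 dF3.
apply: ext0_disconnected => //.
apply: (K2_disconnected phi_continuous (a := a) (b := b)).
- by rewrite (phia (phi a)) ?ltrN10 //; exists a.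
- by rewrite (phib (phi b)) //; [lra | exists b].
Qed.
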